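(* Let $b \geq 2$ be an integer and let $r$ be an integer with $1 \leq r \leq b$. Let $n_1, n_2, \dots, n_r$ be integers such that $0 \leq n_1 \leq n_2 \leq \dots \leq n_r$. Then $$ \sum_{1 \leq i \leq r} S_b(n_i) + \sum_{1 \leq i \leq r-1} (r-i)\, n_i \leq S_b\left(\sum_{1 \leq i \leq r} n_i\right). $$
   Context: For an integer $b \geq 2$ and a nonnegative integer $n$, $s_b(n)$ denotes the sum of the digits in the base-$b$ expansion of $n$, and $S_b(n) := \sum_{1 \leq j \leq n-1} s_b(j)$ (an empty sum being $0$, so $S_b(0)=S_b(1)=0$). *)

From mathcomp Require Import all_boot.
Set Implicit Arguments. Unset Strict Implicit. Unset Printing Implicit Defensive.

(* Sum of base-b digits of n, computed with fuel n (enough since each step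
   divides n by b >= 2; for b <= 1 the value is irrelevant). *)
Fixpoint sdigits_fuel (fuel b n : nat) : nat :=
  match fuel with
  | 0 => 0
  | fuel'.+1 => if n == 0 then 0 else n %% b + sdigits_fuel fuel' b (n %/ b)
  end.

Definition s_b (b n : nat) : nat := sdigits_fuel n b n.

Definition S_b (b n : nat) : nat := \sum_(1 <= j < n) s_b b j.

Lemma s_b_test : [seq s_b 10 k | k <- [:: 0; 9; 10; 123; 999]] = [:: 0; 9; 1; 6; 27].
Proof. by []. Qed.
Lemma s_b_test2 : [seq s_b 2 k | k <- [:: 7; 8; 13]] = [:: 3; 1; 3].
Proof. by []. Qed.

From mathcomp Require Import all_boot zify.
Set Implicit Arguments. Unset Strict Implicit. Unset Printing Implicit Defensive.

(* Strong induction on n_1 + ... + n_r.  When every n_i is 0 or 1 both sides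
   are binomial coefficients.  Otherwise write n_i = q_i b + d_i and split n_i
   into the b nearly equal parts q_i + [e < d_i], e < b: for each e these parts
   form a nondecreasing family with smaller sum, so induction applies, and
   S_b(n_i) is the sum of S_b over the parts plus q_i C(b,2) + C(d_i,2).
   Summing over e leaves a comparison between the S_b(Q + c_e), where
   Q = sum q_i and c_e = #{i | e < d_i}, and S_b(Q b + sum d_i).  For this,
   S_b(Q + x) = S_b(Q) + x s_b(Q) + C(x,2) - Phi(x) with Phi convex (its
   increments s_b(Q) + t - s_b(Q + t) grow with t), so Jensen's inequality
   disposes of Phi; the binomial terms count the pairs of cells sharing a row
   or a column in the Ferrers diagram with columns d_i inside a b x b box,
   and that count is largest when the cells fill the rows one after another. *)

Lemma bin2S n : 'C(n.+1, 2) = 'C(n, 2) + n.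
Proof. by rewrite binS bin1. Qed.

Lemma bin2D m n : 'C(m + n, 2) = 'C(m, 2) + 'C(n, 2) + m * n.
Proof.
elim: n => [|n IHn]; first by rewrite !addn0 muln0 addn0.
by rewrite addnS !bin2S IHn mulnS; lia.
Qed.

Lemma sum_ord_ltn x H : \sum_(e < H) (e < x) = minn x H.
Proof.
elim: H => [|H IH]; first by rewrite big_ord0 minn0.
by rewrite big_ord_recr /= IH; case: ltnP => /=; lia.
Qed.

Lemma divmodn_MDl m u v : v < m -> (u * m + v) %/ m = u /\ (u * m + v) %% m = v.
Proof.
move=> lt_vm; rewrite modnMDl modn_small // divnMDl ?divn_small ?addn0 //; lia.
Qed.

Section DigitSum.

Variable b : nat.
Hypothesis b_gt1 : 1 < b.

Lemma sdigits_fuel_enough f1 f2 n : n <= f1 -> n <= f2 ->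
  sdigits_fuel f1 b n = sdigits_fuel f2 b n.
Proof.
elim: f1 f2 n => [|f1 IH] [|f2] n n_f1 n_f2 /=; try by case: n n_f1 n_f2.
have [//|n_gt0] := posnP n.
by rewrite (IH f2) //; have := ltn_Pdiv b_gt1 n_gt0; lia.
Qed.

Lemma s_b_digit q d : d < b -> s_b b (q * b + d) = s_b b q + d.
Proof.
move=> lt_db; rewrite /s_b; case E: (q * b + d) => [|m] /=.
  by have [-> ->] : q = 0 /\ d = 0 by nia.
rewrite -E; have [-> ->] := divmodn_MDl q lt_db.
by rewrite addnC (@sdigits_fuel_enough m q); nia.
Qed.

Lemma s_b_succ_le x : s_b b x.+1 <= (s_b b x).+1.
Proof.
elim/ltn_ind: x => x IH; rewrite {1 2}(divn_eq x b).
have lt_xb : x %% b < b by rewrite ltn_mod; lia.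
case: (ltnP (x %% b).+1 b) => [lt_x1b | le_bx1].
  by rewrite -addnS !s_b_digit // addnS.
have -> : (x %/ b * b + x %% b).+1 = (x %/ b).+1 * b + 0 by lia.
rewrite !s_b_digit //; last lia.
have x_gt0 : 0 < x by have := leq_mod x b; lia.
by have := IH (x %/ b) (ltn_Pdiv b_gt1 x_gt0); lia.
Qed.

Lemma s_b_add_le x t : s_b b (x + t) <= s_b b x + t.
Proof.
elim: t => [|t IH]; first by rewrite !addn0.
by rewrite addnS; have := s_b_succ_le (x + t); lia.
Qed.

End DigitSum.

Lemma S_b0 b : S_b b 0 = 0.
Proof. by rewrite /S_b big_geq. Qed.

Lemma S_bS b n : S_b b n.+1 = S_b b n + s_b b n.
Proof. by rewrite /S_b; case: n => [|n]; [rewrite !big_geq | rewrite big_nat_recr]. Qed.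

Lemma S_b_digit b q v : 1 < b -> v <= b ->
  S_b b (q * b + v) = b * S_b b q + q * 'C(b, 2) + v * s_b b q + 'C(v, 2).
Proof.
move=> b_gt1; elim: q v => [|q IHq]; elim=> [|v IHv] le_vb.
- by rewrite S_b0 muln0.
- rewrite addnS S_bS IHv 1?ltnW // s_b_digit // bin2S S_b0 /=; lia.
- rewrite addn0 mulSn addnC IHq // S_bS mulnDr mulSn bin0n /=; lia.
- rewrite addnS S_bS IHv 1?ltnW // s_b_digit // bin2S mulSn; lia.
Qed.

Lemma S_b_small b v : 1 < b -> v <= b -> S_b b v = 'C(v, 2).
Proof.
move=> b_gt1 le_vb; have := S_b_digit 0 b_gt1 le_vb.
by rewrite mul0n add0n S_b0 muln0 => ->; rewrite muln0.
Qed.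

Definition column b e n := n %/ b + (e < n %% b).

Section Columns.

Variable b : nat.
Hypothesis b_gt1 : 1 < b.

Let b_gt0 : 0 < b. Proof. exact: ltnW. Qed.
Let lt_mod n : n %% b < b. Proof. by rewrite ltn_mod. Qed.

Lemma sum_column n : \sum_(e < b) column b e n = n.
Proof.
rewrite big_split /= sum_nat_const card_ord sum_ord_ltn.
by rewrite (minn_idPl (ltnW (lt_mod n))) mulnC -divn_eq.
Qed.

Lemma column_le e n : column b e n <= n.
Proof. by have := divn_eq n b; rewrite /column; case: ltnP => /= lt_e; nia. Qed.

Lemma column_lt e n : 1 < n -> column b e n < n.
Proof.
move=> n_gt1; have := lt_mod n; have := divn_eq n b.
by rewrite /column; case: ltnP => /= lt_e; nia.
Qed.

Lemma sum_column_lt e r (n : 'I_r -> nat) i0 : 1 < n i0 ->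
  \sum_(i < r) column b e (n i) < \sum_(i < r) n i.
Proof.
move=> n_i0_gt1; rewrite (bigD1 i0) // [X in _ < X](bigD1 i0) //= -addSn.
by rewrite leq_add ?column_lt // leq_sum // => i _; apply: column_le.
Qed.

Lemma leq_column e : {homo column b e : m n / m <= n}.
Proof.
move=> m n le_mn; rewrite /column.
have := leq_div2r b le_mn; rewrite leq_eqVlt => /orP [/eqP eq_div | lt_div].
  have le_mod : m %% b <= n %% b.
    by move: le_mn; rewrite {1}(divn_eq m b) {1}(divn_eq n b) eq_div leq_add2l.
  by rewrite eq_div leq_add2l; case: ltnP => //= lt_e; rewrite (leq_trans lt_e).
by case: (_ < _); case: (_ < _); lia.
Qed.

Lemma S_b_column n :
  S_b b n = \sum_(e < b) S_b b (column b e n) + n %/ b * 'C(b, 2) + 'C(n %% b, 2).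
Proof.
rewrite (eq_bigr (fun e : 'I_b => S_b b (n %/ b) + (e < n %% b) * s_b b (n %/ b))).
  rewrite big_split /= sum_nat_const card_ord -big_distrl /= sum_ord_ltn.
  rewrite (minn_idPl (ltnW (lt_mod n))) {1}(divn_eq n b) S_b_digit //; [lia | exact: ltnW].
by move=> e _; rewrite /column; case: (_ < _); rewrite ?addn0 ?addn1 ?S_bS /=; lia.
Qed.

End Columns.

(* s lists the column lengths of a Ferrers diagram of height at most H, so that
   row e has \sum_(x <- s) (e < x) cells; aligned_pairs counts the pairs of
   cells lying in a common row or in a common column. *)
Definition row_pairs H (s : seq nat) := \sum_(e < H) 'C(\sum_(x <- s) (e < x), 2).
Definition col_pairs (s : seq nat) := \sum_(x <- s) 'C(x, 2).
Definition aligned_pairs H s := row_pairs H s + col_pairs s.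

(* The value of aligned_pairs on D cells filling an m x m box row by row. *)
Definition greedy_pairs m D :=
  m * 'C(D %/ m, 2) + D %/ m * 'C(m, 2) + D %/ m * (D %% m) + 'C(D %% m, 2).

Lemma greedy_pairsD m D : 0 < m -> greedy_pairs m (m + D) = greedy_pairs m D + D + 'C(m, 2).
Proof.
move=> m_gt0; have lt_mod : D %% m < m by rewrite ltn_mod.
rewrite /greedy_pairs (divn_eq D m); move: (D %/ m) (D %% m) lt_mod => u v lt_vm.
have -> : m + (u * m + v) = u.+1 * m + v by rewrite mulSn addnA.
have [-> ->] := divmodn_MDl u.+1 lt_vm; have [-> ->] := divmodn_MDl u lt_vm.
by rewrite bin2S !mulnDr !mulSn (mulnC m u); lia.
Qed.

Lemma greedy_pairs_mono m D : D <= m * m -> greedy_pairs m D <= greedy_pairs m.+1 D.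
Proof.
case: m => [|m]; first by rewrite leqn0 => /eqP ->.
move=> le_D; rewrite /greedy_pairs (divn_eq D m.+2).
have lt_mod : D %% m.+2 < m.+2 by rewrite ltn_mod.
have le_div : D %/ m.+2 <= m.
  by rewrite -ltnS ltn_divLR //; apply: leq_ltn_trans le_D _; nia.
move: (D %/ m.+2) (D %% m.+2) lt_mod le_div => u v lt_v le_u.
have [-> ->] := divmodn_MDl u lt_v.
have eq_bin : 'C(m.+2, 2) = 'C(m.+1, 2) + m.+1 by rewrite bin2S.
case: (ltnP (u + v) m.+1) => [lt_uv | le_uv].
  have -> : u * m.+2 + v = u * m.+1 + (u + v) by rewrite mulnS; lia.
  have [-> ->] := divmodn_MDl u lt_uv.
  by rewrite bin2D eq_bin; nia.
set w := u + v - m.+1.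
have lt_w : w < m.+1 by rewrite /w; lia.
have -> : u * m.+2 + v = u.+1 * m.+1 + w by rewrite /w !mulSn mulnS; lia.
have [-> ->] := divmodn_MDl u.+1 lt_w.
have eq_uv : u + v = w + m.+1 by rewrite /w; lia.
have := bin2D u v; rewrite eq_uv bin2D => split_uv.
by rewrite bin2S eq_bin; nia.
Qed.

Lemma sumn_le_size_mul H s : all (fun x => x <= H) s -> sumn s <= size s * H.
Proof. by elim: s => //= x s IH /andP [le_xH /IH]; rewrite mulSn; lia. Qed.

Lemma sumn_predn s : all (fun x => 0 < x) s -> sumn s = size s + sumn (map predn s).
Proof. by elim: s => //= -[|x] s IH //= /IH ->; lia. Qed.

Lemma sumn_filter_pos s : sumn [seq x <- s | 0 < x] = sumn s.
Proof. by rewrite !sumnE big_filter big_mkcond; apply: eq_bigr => -[]. Qed.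

Lemma all_leq_notin H s : all (fun x => x <= H.+1) s -> H.+1 \notin s ->
  all (fun x => x <= H) s.
Proof.
move=> /allP le_sH H_notin_s; apply/allP => x x_in_s; have := le_sH x x_in_s.
by rewrite leq_eqVlt => /predU1P [eq_x | //]; rewrite -eq_x x_in_s in H_notin_s.
Qed.

Lemma sum_ltn_bounded H s : all (fun x => x <= H) s ->
  \sum_(e < H) \sum_(x <- s) (e < x) = sumn s.
Proof.
move=> /allP le_sH; rewrite exchange_big sumnE; apply: eq_big_seq => x /le_sH le_xH.
by rewrite sum_ord_ltn (minn_idPl le_xH).
Qed.

Lemma aligned_pairs_nil H : aligned_pairs H [::] = 0.
Proof.
by rewrite /aligned_pairs /row_pairs /col_pairs big_nil addn0 big1 // => e _; rewrite big_nil.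
Qed.

Lemma aligned_pairs0 s : all (fun x => x <= 0) s -> aligned_pairs 0 s = 0.
Proof.
move=> /allP s0; rewrite /aligned_pairs /row_pairs big_ord0 /col_pairs big1_seq //.
by move=> x /andP [_ /s0]; rewrite leqn0 => /eqP ->.
Qed.

Lemma aligned_pairs_perm H s t : perm_eq s t -> aligned_pairs H s = aligned_pairs H t.
Proof.
move=> eq_st; rewrite /aligned_pairs /row_pairs /col_pairs (perm_big _ eq_st).
by congr (_ + _); apply: eq_bigr => e _; rewrite (perm_big _ eq_st).
Qed.

Lemma aligned_pairs_filter_pos H s :
  aligned_pairs H [seq x <- s | 0 < x] = aligned_pairs H s.
Proof.
have drop0 F : F 0 = 0 -> \sum_(x <- [seq x <- s | 0 < x]) F x = \sum_(x <- s) F x.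
  by move=> F0; rewrite big_filter big_mkcond; apply: eq_bigr => -[].
rewrite /aligned_pairs /row_pairs /col_pairs drop0 //.
by congr (_ + _); apply: eq_bigr => e _; rewrite drop0.
Qed.

Lemma aligned_pairs_widen H s : all (fun x => x <= H) s ->
  aligned_pairs H.+1 s = aligned_pairs H s.
Proof.
move=> /allP le_sH; rewrite /aligned_pairs /row_pairs big_ord_recr /=.
rewrite (_ : \sum_(x <- s) (H < x) = 0) ?addn0 //.
by rewrite big1_seq // => x /andP [_ /le_sH]; rewrite ltnNge => ->.
Qed.

Lemma aligned_pairs_cons_full H s : all (fun x => x <= H) s ->
  aligned_pairs H (H :: s) = aligned_pairs H s + sumn s + 'C(H, 2).
Proof.
move=> le_sH; rewrite /aligned_pairs /row_pairs /col_pairs.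
under [X in X + _]eq_bigr => e _ do rewrite big_cons ltn_ord add1n bin2S.
by rewrite big_cons big_split /= sum_ltn_bounded //; lia.
Qed.

Lemma aligned_pairs_rem_full H s : H \in s -> all (fun x => x <= H) s ->
  aligned_pairs H s = aligned_pairs H (rem H s) + sumn (rem H s) + 'C(H, 2).
Proof.
move=> H_in_s /allP le_sH; have eq_s := perm_to_rem H_in_s.
rewrite (aligned_pairs_perm _ eq_s) aligned_pairs_cons_full //.
by apply/allP => x /mem_rem; apply: le_sH.
Qed.

Lemma aligned_pairs_peel H s : all (fun x => 0 < x) s ->
  aligned_pairs H.+1 s = aligned_pairs H (map predn s) + sumn (map predn s) + 'C(size s, 2).
Proof.
move=> /allP pos; rewrite /aligned_pairs /row_pairs /col_pairs big_ord_recl /=.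
have -> : \sum_(x <- s) (0 < x) = size s.
  by rewrite -sum1_size; apply: eq_big_seq => x /pos ->.
rewrite (eq_bigr (fun e : 'I_H => 'C(\sum_(x <- map predn s) (e < x), 2))); last first.
  by move=> e _; rewrite big_map; congr 'C(_, 2); apply: eq_bigr => -[].
rewrite !big_map sumnE big_map.
have -> : \sum_(x <- s) 'C(x, 2) = \sum_(x <- s) 'C(x.-1, 2) + \sum_(x <- s) x.-1.
  by rewrite -big_split; apply: eq_big_seq => x /pos; case: x => // x _; rewrite bin2S.
lia.
Qed.

Lemma aligned_pairs_le T H s : size s <= T -> all (fun x => x <= H) s ->
  aligned_pairs H s <= greedy_pairs (maxn T H) (sumn s).
Proof.
have [k le_k] : exists k, T + H <= k by exists (T + H).
elim: k T H s le_k => [|k IH] [|T] [|H] s //= le_k size_s le_sH;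
  try by [rewrite aligned_pairs0 | case: s size_s le_sH => // _ _; rewrite aligned_pairs_nil].
case: (leqP T H) => [le_TH | lt_HT].
  have [H_in_s | H_notin_s] := boolP (H.+1 \in s).
    set t := rem H.+1 s.
    have sumn_s : sumn s = H.+1 + sumn t by rewrite (perm_sumn (perm_to_rem H_in_s)).
    have size_t : size t <= T by move: size_s; rewrite (perm_size (perm_to_rem H_in_s)).
    have le_tH : all (fun x => x <= H.+1) t by apply/allP => x /mem_rem; apply: (allP le_sH).
    rewrite aligned_pairs_rem_full // -/t sumn_s; have := IH T H.+1 t ltac:(lia) size_t le_tH.
    have -> : maxn T H.+1 = H.+1 by lia.
    have -> : maxn T.+1 H.+1 = H.+1 by lia.
    by rewrite greedy_pairsD //; lia.
  have le_sH' := all_leq_notin le_sH H_notin_s.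
  rewrite aligned_pairs_widen //; have := IH T.+1 H s ltac:(lia) size_s le_sH'.
  have [eq_TH | lt_TH] := eqVneq T H; first by have -> : maxn T.+1 H = maxn T.+1 H.+1 by lia.
  have -> : maxn T.+1 H = H by lia.
  have -> : maxn T.+1 H.+1 = H.+1 by lia.
  move/leq_trans; apply; apply: greedy_pairs_mono.
  by have := sumn_le_size_mul le_sH'; nia.
have [/andP [/eqP size_s_eq pos_s] | not_full] :=
  boolP ((size s == T.+1) && all (fun x => 0 < x) s).
  have le_tH : all (fun x => x <= H) (map predn s).
    by rewrite all_map; apply: sub_all le_sH => x /=; lia.
  rewrite aligned_pairs_peel // (sumn_predn pos_s) size_s_eq.
  have := IH T.+1 H (map predn s) ltac:(lia) ltac:(by rewrite size_map size_s_eq) le_tH.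
  have -> : maxn T.+1 H = T.+1 by lia.
  have -> : maxn T.+1 H.+1 = T.+1 by lia.
  by rewrite addnC greedy_pairsD //; lia.
set t := [seq x <- s | 0 < x].
have size_t : size t <= T.
  rewrite size_filter; have := count_size (fun x => 0 < x) s.
  by move: not_full; rewrite negb_and all_count; case/orP; lia.
have le_tH : all (fun x => x <= H.+1) t.
  by rewrite all_filter; apply: sub_all le_sH => x /= ->; rewrite implybT.
rewrite -aligned_pairs_filter_pos -sumn_filter_pos.
have := IH T H.+1 t ltac:(lia) size_t le_tH.
have -> : maxn T H.+1 = T by lia.
have -> : maxn T.+1 H.+1 = T.+1 by lia.
move/leq_trans; apply; apply: greedy_pairs_mono.
by have := sumn_le_size_mul le_tH; nia.
Qed.

Section DiscreteConvexity.

Variable f : nat -> nat.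
Hypothesis f_mono : {homo f : m n / m <= n}.

Lemma sum_ord_addn_ge u k : \sum_(t < u) f t + k * f u <= \sum_(t < u + k) f t.
Proof.
elim: k => [|k IH]; first by rewrite mul0n !addn0.
rewrite addnS big_ord_recr /= mulSn addnCA addnC leq_add //.
exact: f_mono (leq_addr k u).
Qed.

Lemma sum_ord_addn_le x k : \sum_(t < x + k) f t <= \sum_(t < x) f t + k * f (x + k).
Proof.
elim: k => [|k IH]; first by rewrite mul0n !addn0.
rewrite addnS big_ord_recr /= mulSn; apply: leq_trans (leq_add IH (leqnn _)) _.
have f_le := f_mono (leqnSn (x + k)).
by rewrite -addnA leq_add2l addnC leq_add // leq_mul2l f_le orbT.
Qed.

Lemma sum_ord_tangent x u : \sum_(t < u) f t + x * f u <= \sum_(t < x) f t + u * f u.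
Proof.
case: (leqP u x) => [/subnKC <- | /ltnW /subnKC <-].
  by have := sum_ord_addn_ge u (x - u); rewrite mulnDl; lia.
by have := sum_ord_addn_le x (u - x); rewrite mulnDl; lia.
Qed.

Lemma sum_ord_jensen k (c : 'I_k -> nat) u v : \sum_(e < k) c e = k * u + v ->
  k * \sum_(t < u) f t + v * f u <= \sum_(e < k) \sum_(t < c e) f t.
Proof.
move=> sum_c; have : \sum_(e < k) (\sum_(t < u) f t + c e * f u)
    <= \sum_(e < k) (\sum_(t < c e) f t + u * f u).
  by apply: leq_sum => e _; apply: sum_ord_tangent.
rewrite !big_split /= -big_distrl /= sum_c !sum_nat_const card_ord; nia.
Qed.

End DiscreteConvexity.

(* The subtraction never truncates, by s_b_add_le. *)
Definition carry_defect b Q t := s_b b Q + t - s_b b (Q + t).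

Section ShiftedDigitSum.

Variables b Q : nat.
Hypothesis b_gt1 : 1 < b.

Lemma carry_defect_mono : {homo carry_defect b Q : m n / m <= n}.
Proof.
apply: homo_leq => [//|y x z|t]; first exact: leq_trans.
have := s_b_add_le b_gt1 Q t; have := s_b_succ_le b_gt1 (Q + t).
by rewrite /carry_defect !addnS; lia.
Qed.

Lemma S_b_addn x : S_b b (Q + x) + \sum_(t < x) carry_defect b Q t =
  S_b b Q + x * s_b b Q + 'C(x, 2).
Proof.
elim: x => [|x IH]; first by rewrite big_ord0 mul0n bin0n !addn0.
rewrite addnS S_bS big_ord_recr /= bin2S mulSn.
set defects := \sum_(t < x) _ in IH *.
by have := s_b_add_le b_gt1 Q x; rewrite /carry_defect; lia.
Qed.

End ShiftedDigitSum.

Lemma sum_S_b_conjugate_le b Q ds : 1 < b -> size ds <= b -> all (fun d => d < b) ds ->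
  \sum_(e < b) S_b b (Q + \sum_(d <- ds) (e < d)) + Q * 'C(b, 2) + col_pairs ds
    <= S_b b (Q * b + sumn ds).
Proof.
move=> b_gt1 size_ds lt_ds.
have le_ds : all (fun d => d <= b) ds by apply: sub_all lt_ds => d /ltnW.
set c := fun e : 'I_b => \sum_(d <- ds) (e < d).
set D := sumn ds; set u := D %/ b; set v := D %% b.
have eq_D : D = b * u + v by rewrite mulnC -divn_eq.
have lt_v : v < b by rewrite ltn_mod; lia.
have sum_c : \sum_(e < b) c e = D by exact: sum_ltn_bounded.
have jensen := sum_ord_jensen (carry_defect_mono Q b_gt1) (etrans sum_c eq_D).
have pairs := aligned_pairs_le size_ds le_ds; rewrite maxnn -/D in pairs.
have sum_shift : \sum_(e < b) S_b b (Q + c e) + \sum_(e < b) \sum_(t < c e) carry_defect b Q t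
    = b * S_b b Q + D * s_b b Q + row_pairs b ds.
  rewrite -big_split /=; under eq_bigr => e _ do rewrite S_b_addn //.
  by rewrite !big_split /= -big_distrl /= sum_c sum_nat_const card_ord mulnC.
have shift_u := S_b_addn Q b_gt1 u.
have defect_u : s_b b (Q + u) + carry_defect b Q u = s_b b Q + u.
  by have := s_b_add_le b_gt1 Q u; rewrite /carry_defect; lia.
have -> : Q * b + D = (Q + u) * b + v by rewrite eq_D mulnDl addnA (mulnC b).
rewrite S_b_digit // ?(ltnW lt_v) //.
move: pairs jensen sum_shift shift_u defect_u.
rewrite /aligned_pairs /greedy_pairs -/u -/v /c.
rewrite eq_D; nia.
Qed.

Definition S_b_weighted b r (n : 'I_r -> nat) :=
  \sum_(i < r) S_b b (n i) + \sum_(i < r) (r - i.+1) * n i.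

Lemma sum_weight_bool_le r (n : 'I_r -> nat) :
  (forall i j : 'I_r, i <= j -> n i <= n j) -> (forall i, n i <= 1) ->
  \sum_(i < r) (r - i.+1) * n i <= 'C(\sum_(i < r) n i, 2).
Proof.
elim: r n => [|r IH] n n_mono n_le1; first by rewrite !big_ord0.
rewrite !big_ord_recr /= subnn mul0n addn0.
set m := fun i : 'I_r => n (widen_ord (leqnSn r) i).
have := IH m (fun i j => n_mono (widen_ord _ i) (widen_ord _ j)) (fun i => n_le1 _).
rewrite (eq_bigr (fun i : 'I_r => (r - i.+1) * m i + m i)); last first.
  by move=> i _; rewrite -mulSnr subSn.
rewrite big_split /= -/(\sum_(i < r) m i).
have := n_le1 ord_max; case: (n ord_max) (n_mono^~ ord_max) => [|[|//]] le_max _.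
  have m0 i : m i = 0 by apply/eqP; rewrite -leqn0 le_max // leq_ord.
  by rewrite !big1 // => i _; rewrite m0 ?muln0.
by rewrite addn1 bin2S leq_add2r.
Qed.

Section WeightedInequality.

Variables b r : nat.
Hypotheses (b_gt1 : 1 < b) (le_rb : r <= b).

Lemma S_b_weighted_bool_le (n : 'I_r -> nat) :
  (forall i j : 'I_r, i <= j -> n i <= n j) -> (forall i, n i <= 1) ->
  S_b_weighted b n <= S_b b (\sum_(i < r) n i).
Proof.
move=> n_mono n_le1; rewrite /S_b_weighted big1 => [|i _]; last first.
  by have := n_le1 i; case: (n i) => [|[|]] // _; rewrite S_b_small //; lia.
have le_sum_r : \sum_(i < r) n i <= r.
  have : \sum_(i < r) n i <= \sum_(i < r) 1 by apply: leq_sum.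
  by rewrite sum1_card card_ord.
by rewrite S_b_small ?(leq_trans le_sum_r) //; exact: sum_weight_bool_le.
Qed.

Lemma S_b_weighted_columns_le (n : 'I_r -> nat) :
  (forall e : 'I_b, S_b_weighted b (fun i => column b e (n i))
                      <= S_b b (\sum_(i < r) column b e (n i))) ->
  S_b_weighted b n <= S_b b (\sum_(i < r) n i).
Proof.
move=> le_columns.
set ds := [seq n i %% b | i <- index_enum 'I_r]; set Q := \sum_(i < r) n i %/ b.
have size_ds : size ds <= b by rewrite -sum1_size big_map sum1_card card_ord.
have lt_ds : all (fun d => d < b) ds by apply/allP => _ /mapP [i _ ->]; rewrite ltn_mod; lia.
have sum_columns e : \sum_(i < r) column b e (n i) = Q + \sum_(d <- ds) (e < d).
  by rewrite big_split /= big_map.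
have sum_n : \sum_(i < r) n i = Q * b + sumn ds.
  by rewrite sumnE big_map /Q big_distrl -big_split; apply: eq_bigr => i _ /=; rewrite -divn_eq.
have sum_S_b : \sum_(i < r) S_b b (n i) =
    \sum_(e < b) \sum_(i < r) S_b b (column b e (n i)) + Q * 'C(b, 2) + col_pairs ds.
  under eq_bigr => i _ do rewrite (S_b_column b_gt1).
  by rewrite !big_split /= exchange_big -big_distrl /col_pairs big_map.
have sum_weights : \sum_(i < r) (r - i.+1) * n i =
    \sum_(e < b) \sum_(i < r) (r - i.+1) * column b e (n i).
  by rewrite exchange_big; apply: eq_bigr => i _; rewrite -big_distrr sum_column.
have le_sum : \sum_(e < b) \sum_(i < r) S_b b (column b e (n i)) + \sum_(i < r) (r - i.+1) * n i
    <= \sum_(e < b) S_b b (Q + \sum_(d <- ds) (e < d)).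
  rewrite sum_weights -big_split; apply: leq_sum => e _.
  by rewrite -sum_columns; apply: le_columns.
rewrite /S_b_weighted sum_S_b sum_n.
apply: leq_trans (sum_S_b_conjugate_le Q b_gt1 size_ds lt_ds); lia.
Qed.

End WeightedInequality.

Lemma S_b_weighted_le b r (n : 'I_r -> nat) : 1 < b -> r <= b ->
  (forall i j : 'I_r, i <= j -> n i <= n j) -> S_b_weighted b n <= S_b b (\sum_(i < r) n i).
Proof.
move=> b_gt1 le_rb; have [N] := ubnP (\sum_(i < r) n i).
elim: N n => // N IH n lt_sum_N n_mono.
have [n_le1 | /forallPn [i0]] := boolP [forall i, n i <= 1].
  by apply: S_b_weighted_bool_le => // i; apply: (forallP n_le1).
rewrite -ltnNge => n_i0_gt1; apply: S_b_weighted_columns_le => // e.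
apply: IH => [|i j le_ij]; last exact/leq_column/n_mono.
exact: leq_trans (sum_column_lt b_gt1 e n_i0_gt1) lt_sum_N.
Qed.

(* The paper's n_1, ..., n_r are n 0, ..., n (r - 1), so its weight r - i
   becomes r - i.+1. *)
Theorem theorem5 (b r : nat) (n : 'I_r -> nat) :
  2 <= b -> 1 <= r <= b ->
  (forall i j : 'I_r, i <= j -> n i <= n j) ->
  \sum_(i < r) S_b b (n i) + \sum_(i < r) (r - i.+1) * n i
    <= S_b b (\sum_(i < r) n i).
Proof. by move=> b_gt1 /andP [_ le_rb]; apply: S_b_weighted_le. Qed.
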